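(* Let $A$ be an abelian variety of dimension $g\ge1$ over a finite field $\mathbb F_q$. Suppose that $P_A(T)$ has cycle types $(2g)$ and $(2,1,1,\ldots,1)$, and that $Q_A(T)$ has cycle type $\sigma$ for every partition $\sigma$ of $g$. Then $\operatorname{Gal}(P_A(T))\cong W_{2g}$.
   Context: $P_A(T)\in\mathbb Z[T]$ is the unique polynomial of degree $2g$ such that the isogeny $r-\pi_A$ has degree $P_A(r)$ for all $r\in\mathbb Z$, where $\pi_A$ is the $q$-power Frobenius endomorphism of $A$; it satisfies $P_A(q/T)/(q/T)^g=P_A(T)/T^g$. $Q_A(T)\in\mathbb Z[T]$ is the unique polynomial with $P_A(T)=T^gQ_A(T+q/T)$. $W_{2g}$ is the group of permutations of $\{1,\ldots,2g\}$ that permute the set of pairs $\{\{1,2\},\ldots,\{2g-1,2g\}\}$. For $f\in\mathbb Z[T]$ of degree $n$, $\operatorname{Gal}(f)$ is the Galois group over $\mathbb Q$ of its splitting field; a partition $\sigma=(\sigma_1,\ldots,\sigma_k)$ of $n$ ($\sigma_1\ge\cdots\ge\sigma_k\ge1$, $\sum\sigma_i=n$) is a cycle type of $f$ if $f$ is separable and the image of $\operatorname{Gal}(f)$ in the symmetric group $\mathfrak S_n$ (via a numbering of the roots) contains a permutation whose disjoint cycle lengths are $\sigma_1,\ldots,\sigma_k$. *)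

From HB Require Import structures.
From mathcomp Require Import all_boot all_order all_algebra all_fingroup all_field.
From mathcomp Require Import boolp.
Set Implicit Arguments. Unset Strict Implicit. Unset Printing Implicit Defensive.
Import Order.TTheory GRing.Theory Num.Theory.
Local Open Scope ring_scope.

Definition polyC_of (f : {poly int}) : {poly algC} := map_poly intr f.

Definition root_numbering (f : {poly int}) (n : nat) (rs : n.-tuple algC) : Prop :=
  uniq rs /\
  polyC_of f = ((lead_coef f)%:~R : algC) *: \prod_(r <- rs) ('X - r%:P).

(* The image of Gal(f) (= Gal(Qbar/Q) acting on the roots) in S_n, via the
   numbering rs.  Every ring endomorphism of algC is a field automorphism
   fixing Q, and every automorphism of the splitting field extends. *)
Definition galperm (n : nat) (rs : n.-tuple algC) : {set 'S_n} :=
  [set s : 'S_n | `[< exists u : {rmorphism algC -> algC},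
                        forall i : 'I_n, u (tnth rs i) = tnth rs (s i) >]].

Definition cycle_type (n : nat) (s : 'S_n) : seq nat :=
  sort geq (map (fun X : {set 'I_n} => #|X|) (enum (porbits s))).

Definition is_partition (n : nat) (sigma : seq nat) : Prop :=
  [/\ sorted geq sigma, all (fun k => 0 < k)%N sigma & sumn sigma = n].

Definition has_cycle_type (f : {poly int}) (sigma : seq nat) : Prop :=
  exists rs : ((size f).-1).-tuple algC,
    root_numbering f rs /\ exists2 s, s \in galperm rs & cycle_type s = sigma.

(* W_{2g}: permutations of {0,...,2g-1} permuting the pairs {2i, 2i+1}
   (0-indexed version of {1,2},...,{2g-1,2g}). *)
Definition W (g : nat) : {set 'S_(g.*2)} :=
  [set s : 'S_(g.*2) | [forall i, forall j,
      ((val i)./2 == (val j)./2) == ((val (s i))./2 == (val (s j))./2)]].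

(* The 2g roots of P come in pairs {a, q/a}, and a |-> a + q/a maps them
   two-to-one onto the g roots of Q.  Hence Gal(P) preserves this pairing, i.e.
   it lies in (a conjugate of) W_2g, and it maps onto Gal(Q).  A group of
   degree g containing a g-cycle, a transposition and a (g-1)-cycle is S_g, so
   Gal(P) maps onto S_g.  A transposition in Gal(P) commutes with a |-> q/a,
   hence swaps a single pair; conjugating it by lifts of transpositions of S_g
   yields every pair swap, so the kernel of Gal(P) -> S_g is all of (Z/2)^g and
   Gal(P) is the whole stabilizer of the pairing. *)

From mathcomp Require Import all_boot all_order all_algebra all_fingroup all_field.
From mathcomp Require Import boolp.
From mathcomp Require Import ring zify.

Set Implicit Arguments.
Unset Strict Implicit.
Unset Printing Implicit Defensive.

Import Order.TTheory GRing.Theory Num.Theory.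
Local Open Scope ring_scope.

Section Orbits.

Variable T : finType.
Implicit Types (s t : {perm T}) (x y : T).

Lemma partition_porbits s : partition (porbits s) [set: T].
Proof.
apply/and3P; split.
- apply/eqP/setP=> x; rewrite inE; apply/bigcupP.
  by exists (porbit s x); [apply: imset_f | exact: porbit_id].
- apply/trivIsetP=> _ _ /imsetP[a _ ->] /imsetP[b _ ->] neq_ab.
  rewrite -setI_eq0; apply/eqP/setP=> y; rewrite !inE.
  apply/negbTE/andP; rewrite -!eq_porbit_mem => -[/eqP ya /eqP yb].
  by rewrite -ya yb eqxx in neq_ab.
- by apply/imsetP=> -[x _ /esym/setP/(_ x)]; rewrite porbit_id inE.
Qed.

Lemma porbit_step s x y : y \in porbit s x -> s y \in porbit s x.
Proof. by case/porbitP=> i ->; rewrite -permM -expgSr mem_porbit. Qed.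

Lemma porbit_trans s x y z : y \in porbit s x -> z \in porbit s x -> z \in porbit s y.
Proof. by rewrite -eq_porbit_mem => /eqP ->. Qed.

Lemma porbit_fixed s x : s x = x -> porbit s x = [set x].
Proof.
move=> sx; apply/setP=> y; rewrite inE; apply/porbitP/eqP=> [[i ->]|->].
  by rewrite permX_fix.
by exists 0; rewrite expg0 perm1.
Qed.

Lemma porbit_card1 s x : #|porbit s x| = 1%N -> s x = x.
Proof.
move/eqP/cards1P=> [y Ey]; have := porbit_step (porbit_id s x).
by rewrite Ey !inE => /eqP->; apply/esym/eqP; rewrite -in_set1 -Ey porbit_id.
Qed.

Lemma porbitJ s t x : porbit (s ^ t)%g (t x) = t @: porbit s x.
Proof.
apply/setP=> y; apply/porbitP/imsetP=> [[i ->]|[z /porbitP[i ->] ->]].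
  by exists ((s ^+ i)%g x); [exact: mem_porbit | rewrite -conjXg permJ].
by exists i; rewrite -conjXg permJ.
Qed.

Lemma porbitsJ s t : porbits (s ^ t)%g = (fun X : {set T} => t @: X) @: porbits s.
Proof.
apply/setP=> Y; apply/imsetP/imsetP=> [[x _ ->]|[_ /imsetP[x _ ->] ->]].
  by exists (porbit s (t^-1 x)%g); rewrite ?imset_f // -porbitJ permKV.
by exists (t x); rewrite ?porbitJ.
Qed.

End Orbits.

Section CycleType.

Variable n : nat.
Implicit Types (s t : 'S_n) (x y : 'I_n).

Lemma count_map_card (A : {set {set 'I_n}}) (a : pred nat) :
  count a (map (fun X : {set 'I_n} => #|X|) (enum A)) = #|[set X in A | a #|X|]|.
Proof.
rewrite count_map -size_filter cardE; apply/perm_size/uniq_perm.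
- exact/filter_uniq/enum_uniq.
- exact: enum_uniq.
- by move=> X; rewrite mem_filter !mem_enum !inE andbC.
Qed.

Lemma count_cycle_type s (a : pred nat) :
  count a (cycle_type s) = #|[set X in porbits s | a #|X|]|.
Proof. by rewrite (seq.permP (permEl (perm_sort _ _))) count_map_card. Qed.

Lemma sumn_cycle_type s : sumn (cycle_type s) = n.
Proof.
rewrite (perm_sumn (permEl (perm_sort _ _))) sumnE big_map big_enum /=.
by rewrite -(card_partition (partition_porbits s)) cardsT card_ord.
Qed.

Lemma cycle_typeJ s t : cycle_type (s ^ t)%g = cycle_type s.
Proof.
apply/perm_sortP.
- by move=> a b; rewrite /geq /= leq_total.
- by move=> b a c /= ba cb; apply: leq_trans cb ba.
- by move=> a b /andP[ba ab]; apply/eqP; rewrite eqn_leq; apply/andP.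
apply/seq.permP=> a; rewrite !count_map_card porbitsJ.
have card_t (X : {set 'I_n}) : #|t @: X| = #|X| by apply: card_imset; apply: perm_inj.
rewrite -[RHS](card_imset _ (imset_inj (@perm_inj _ t))); apply: eq_card => Y.
rewrite inE; apply/andP/imsetP=> [[/imsetP[X BX ->] aY]|[X]].
  by exists X; rewrite // inE BX -card_t.
by rewrite inE => /andP[BX aX] ->; rewrite imset_f // card_t.
Qed.

Lemma cycle_type_porbit s m : m \in cycle_type s -> exists x, #|porbit s x| = m.
Proof.
rewrite -has_pred1 has_count count_cycle_type card_gt0 => /set0Pn[X].
by rewrite inE => /andP[/imsetP[x _ ->] /eqP]; exists x.
Qed.

Lemma cycle_type_full s : cycle_type s = [:: n] -> exists x, forall y, y \in porbit s x.
Proof.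
move=> ct; have [x cx] : exists x, #|porbit s x| = n%N.
  by apply: cycle_type_porbit; rewrite ct mem_head.
exists x => y; suff -> : porbit s x = [set: 'I_n] by rewrite inE.
by apply/eqP; rewrite eqEcard subsetT cardsT card_ord cx leqnn.
Qed.

Lemma cycle_type_tperm s : cycle_type s = 2%N :: nseq (n - 2) 1%N ->
  exists x y, x != y /\ s = tperm x y.
Proof.
move=> ct; have [x cx] : exists x, #|porbit s x| = 2%N.
  by apply: cycle_type_porbit; rewrite ct mem_head.
have one_long : #|[set X in porbits s | #|X| != 1%N]| = 1%N.
  by rewrite -(count_cycle_type s (fun k => k != 1%N)) ct /= count_nseq mul0n.
have fixed y : y \notin porbit s x -> s y = y.
  move=> yx; apply: porbit_card1; apply/eqP/negPn/negP=> y1.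
  have /cards1P[Z EZ] := introT eqP one_long.
  have longZ X : X \in porbits s -> #|X| != 1%N -> X = Z.
    by move=> sX X1; apply/set1P; rewrite -EZ inE sX.
  have xZ : porbit s x = Z by apply: longZ; rewrite ?cx // imset_f.
  have yZ : porbit s y = Z by apply: longZ; rewrite // imset_f.
  by rewrite -eq_porbit_mem xZ yZ eqxx in yx.
have sx : s x != x by apply/eqP=> /porbit_fixed sxx; rewrite sxx cards1 in cx.
have orb_x : porbit s x = [set x; s x].
  apply/esym/eqP; rewrite eqEcard cards2 eq_sym sx cx leqnn andbT.
  apply/subsetP=> y; rewrite !inE => /orP[]/eqP->; first exact: porbit_id.
  exact/porbit_step/porbit_id.
have ssx : s (s x) = x.
  have := porbit_step (porbit_step (porbit_id s x)); rewrite orb_x !inE.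
  by case/orP=> /eqP // /perm_inj ssx; rewrite ssx eqxx in sx.
exists x, (s x); split; first by rewrite eq_sym.
apply/permP=> y; have [->|yx] := eqVneq y x; first by rewrite tpermL.
have [->|ysx] := eqVneq y (s x); first by rewrite tpermR.
by rewrite tpermD 1?eq_sym // fixed // orb_x !inE negb_or yx ysx.
Qed.

Lemma cycle_type_fix_cycle s : cycle_type s = [:: n.-1; 1%N] ->
  exists x0 y0, s x0 = x0 /\ forall y, y != x0 -> y \in porbit s y0.
Proof.
move=> ct; have [y0 cy0] : exists y0, #|porbit s y0| = n.-1%N.
  by apply: cycle_type_porbit; rewrite ct mem_head.
have := sumn_cycle_type s; rewrite ct /= addn0 => n_eq.
have /cards1P[x0 Ex0] : #|~: porbit s y0| == 1%N.
  by apply/eqP; move: (cardsC (porbit s y0)); rewrite card_ord cy0; lia.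
have outside y : (y \notin porbit s y0) = (y == x0) by rewrite -in_setC Ex0 inE.
exists x0, y0; split=> [|y]; last by rewrite -outside negbK.
apply/eqP; rewrite -outside; apply: contraTN (eqxx x0); rewrite -outside negbK.
by rewrite porbit_sym -[in s x0](expg1 s) porbit_perm porbit_sym.
Qed.

End CycleType.

Section SymmetricGeneration.

Variables (T : finType) (H : {group {perm T}}).

Lemma tperm_star_full x0 : (forall y, tperm x0 y \in H) -> H :=: [set: {perm T}].
Proof.
move=> Hx0; apply/eqP; rewrite eqEsubset subsetT -(gen_tperm x0) gen_subG.
by apply/subsetP=> _ /imsetP[y _ ->].
Qed.

Lemma tperm_star_of_cycles (a b x0 x1 y0 : T) (s1 s3 : {perm T}) :
  a != b -> tperm a b \in H ->
  s1 \in H -> (forall y, y \in porbit s1 x1) ->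
  s3 \in H -> s3 x0 = x0 -> (forall y, y != x0 -> y \in porbit s3 y0) ->
  forall y, tperm x0 y \in H.
Proof.
move=> ab Hab Hs1 s1_trans Hs3 s3x0 s3_trans.
have [b' b'x0 Hx0b'] : exists2 b', b' != x0 & tperm x0 b' \in H.
  have /porbitP[i ->] := porbit_trans (s1_trans a) (s1_trans x0).
  exists ((s1 ^+ i)%g b); first by rewrite (inj_eq perm_inj) eq_sym.
  by rewrite -tpermJ groupJ ?groupX.
move=> y; have [->|yx0] := eqVneq y x0; first by rewrite tperm1 group1.
have /porbitP[j ->] := porbit_trans (s3_trans _ b'x0) (s3_trans _ yx0).
by rewrite -{1}(permX_fix j s3x0) -tpermJ groupJ ?groupX.
Qed.

End SymmetricGeneration.

Lemma is_partition_full n : (0 < n)%N -> is_partition n [:: n].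
Proof. by move=> n_gt0; split; rewrite //= ?n_gt0 ?addn0. Qed.

Lemma is_partition_tperm n : (1 < n)%N -> is_partition n (2%N :: nseq (n - 2) 1%N).
Proof.
move=> n_gt1; split=> /=; last by rewrite sumn_nseq mul1n; lia.
- by case: (n - 2)%N => //= k; elim: k => //= k ->.
- by rewrite all_nseq orbT.
Qed.

Lemma is_partition_fix_cycle n : (1 < n)%N -> is_partition n [:: n.-1; 1%N].
Proof. by move=> n_gt1; split=> /=; lia. Qed.

Lemma perm_group_all_cycle_types m (H : {group 'S_m}) :
  (forall sigma, is_partition m sigma -> exists2 s, s \in H & cycle_type s = sigma) ->
  H :=: [set: 'S_m].
Proof.
move=> Hct; have [m_le1|m_gt1] := leqP m 1.
  apply/setP=> w; rewrite inE; suff -> : w = 1%g by rewrite group1.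
  apply/permP=> i; apply/val_inj; rewrite perm1 /=.
  by have := ltn_ord i; have := ltn_ord (w i); lia.
have [s1 Hs1 /cycle_type_full[x1 s1_trans]] := Hct _ (is_partition_full (ltnW m_gt1)).
have [t Ht /cycle_type_tperm[a [b [ab tE]]]] := Hct _ (is_partition_tperm m_gt1).
have [s3 Hs3 /cycle_type_fix_cycle[x0 [y0 [s3x0 s3_trans]]]] :=
  Hct _ (is_partition_fix_cycle m_gt1).
apply: (tperm_star_full (x0 := x0)).
by apply: (tperm_star_of_cycles ab _ Hs1 s1_trans Hs3 s3x0 s3_trans); rewrite -tE.
Qed.

Definition fiber_stab (T : finType) (U : eqType) (pi : T -> U) : {set {perm T}} :=
  [set s : {perm T} | [forall i, forall j, (pi i == pi j) == (pi (s i) == pi (s j))]].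

Lemma W_fiber_stab g : W g = fiber_stab (fun i : 'I_(g.*2) => (val i)./2).
Proof. by []. Qed.

Section FiberStab.

Variables (T : finType) (U : eqType) (pi : T -> U).

Lemma fiber_stabP (s : {perm T}) :
  reflect (forall i j, (pi (s i) == pi (s j)) = (pi i == pi j)) (s \in fiber_stab pi).
Proof.
rewrite inE; apply: (iffP forallP) => [Hs i j | Hs i].
  by have /forallP/(_ j)/eqP := Hs i.
by apply/forallP=> j; rewrite Hs.
Qed.

Lemma fiber_stab_group_set : group_set (fiber_stab pi).
Proof.
apply/group_setP; split; first by apply/fiber_stabP=> i j; rewrite !perm1.
by move=> s t /fiber_stabP Hs /fiber_stabP Ht; apply/fiber_stabP=> i j; rewrite !permM Ht Hs.
Qed.

Canonical fiber_stab_group := Group fiber_stab_group_set.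

End FiberStab.

Section FiberStabTheory.

Variables (T : finType) (U : eqType) (pi : T -> U).

Lemma eq_fiber_stab (pi' : T -> U) : pi =1 pi' -> fiber_stab pi = fiber_stab pi'.
Proof.
move=> E; apply/setP=> s.
by apply/fiber_stabP/fiber_stabP=> Hs i j; [rewrite -!E Hs | rewrite !E Hs].
Qed.

Lemma fiber_stab_comp (V : eqType) (f : U -> V) :
  injective f -> fiber_stab (f \o pi) = fiber_stab pi.
Proof.
move=> f_inj; apply/setP=> s.
by apply/fiber_stabP/fiber_stabP=> Hs i j; move: (Hs i j); rewrite /= !(inj_eq f_inj).
Qed.

Lemma fiber_stabJ (t : {perm T}) :
  (fiber_stab pi :^ t)%g = fiber_stab (fun i => pi (t^-1 i)%g).
Proof.
apply/setP=> w; rewrite mem_conjg.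
apply/fiber_stabP/fiber_stabP=> Hw i j.
  by rewrite -(Hw (t^-1 i)%g (t^-1 j)%g) !permJ.
by rewrite -[i](permK t) -[j](permK t) !permJ.
Qed.

End FiberStabTheory.

Section PairedFibers.

Variables (T U : finType) (pi : T -> U) (iota : T -> T).
Hypothesis iotaK : involutive iota.
Hypothesis pi_iota : forall i, pi (iota i) = pi i.
Hypothesis pi_fiber : forall i j, pi j = pi i -> j = i \/ j = iota i.
Hypothesis card_T : #|T| = (#|U|).*2.

Lemma fiber_sub_pair i : [set j | pi j == pi i] \subset [set i; iota i].
Proof. by apply/subsetP=> j; rewrite !inE => /eqP/pi_fiber[]->; rewrite eqxx ?orbT. Qed.

Lemma card_fiber u : #|[set i | pi i == u]| = 2%N.
Proof.
have le2 v : (#|[set i | pi i == v]| <= 2)%N.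
  have [->|[i]] := set_0Vmem [set i | pi i == v]; first by rewrite cards0.
  rewrite inE => /eqP <-; apply: leq_trans (subset_leq_card (fiber_sub_pair i)) _.
  by rewrite cards2 ltnS leq_b1.
have sum_fibers : (\sum_v #|[set i | pi i == v]| = (#|U|).*2)%N.
  rewrite -card_T -sum1_card (partition_big pi xpredT) //=.
  by apply: eq_bigr => v _; rewrite sum1dep_card.
apply/eqP; rewrite eqn_leq le2 leqNgt; apply/negP=> lt2; move: sum_fibers.
rewrite (bigD1 u) //=.
have : (\sum_(v | v != u) #|[set i | pi i == v]| <= \sum_(v | v != u) 2)%N.
  by apply: leq_sum => v _; apply: le2.
rewrite sum_nat_const cardC1.
have : (0 < #|U|)%N by apply/card_gt0P; exists u.
by move: lt2 (\sum_(v | v != u) _)%N; move: #|[set i | pi i == u]| #|U|; lia.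
Qed.

Lemma iota_neq i : iota i != i.
Proof.
apply/eqP=> iota_i; have := subset_leq_card (fiber_sub_pair i).
by rewrite card_fiber iota_i setUid cards1.
Qed.

Lemma pi_surj u : exists i, pi i = u.
Proof.
have := card_fiber u; have [->|[i]] := set_0Vmem [set i | pi i == u].
  by rewrite cards0.
by rewrite inE => /eqP <- _; exists i.
Qed.

Lemma fiber_stab_iota s i : s \in fiber_stab pi -> s (iota i) = iota (s i).
Proof.
move=> /fiber_stabP Hs; have := Hs (iota i) i; rewrite pi_iota eqxx => /eqP.
case/pi_fiber=> // /perm_inj iota_i.
by have := iota_neq i; rewrite iota_i eqxx.
Qed.

Lemma fiber_stab_induced s :
  s \in fiber_stab pi -> exists w : {perm U}, forall i, pi (s i) = w (pi i).
Proof.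
move=> /fiber_stabP Hs; have [a aK] := fin_all_exists pi_surj.
have w_inj : injective (fun u => pi (s (a u))).
  by move=> u v /eqP; rewrite Hs !aK => /eqP.
exists (perm w_inj) => i; rewrite permE /=; apply/eqP.
by rewrite Hs aK.
Qed.

Variable G : {group {perm T}}.
Hypothesis G_sub : G \subset fiber_stab pi.
Hypothesis G_lift : forall w : {perm U}, exists2 s, s \in G & forall i, pi (s i) = w (pi i).

Lemma tperm_iota_mem x y : x != y -> tperm x y \in G -> forall z, tperm z (iota z) \in G.
Proof.
move=> xy Gxy.
have y_iota : y = iota x.
  have := fiber_stab_iota x (subsetP G_sub _ Gxy); rewrite tpermL.
  have [->//|iy] := eqVneq (iota x) y.
  by rewrite tpermD // 1?eq_sym ?iota_neq // => /(can_inj iotaK) xy'; rewrite xy' eqxx in xy.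
move=> z; have [s Gs Hs] := G_lift (tperm (pi x) (pi z)).
have Gsx : tperm (s x) (iota (s x)) \in G.
  by rewrite -fiber_stab_iota ?(subsetP G_sub) // -y_iota -tpermJ groupJ.
have /pi_fiber[] : pi (s x) = pi z by rewrite Hs tpermL.
  by move=> sx; rewrite -sx.
by move=> sx; rewrite sx iotaK tpermC in Gsx.
Qed.

Lemma fiber_kernel_sub :
  (forall z, tperm z (iota z) \in G) ->
  forall s : {perm T}, (forall i, pi (s i) = pi i) -> s \in G.
Proof.
(* Composing with the swap of a moved pair {y, iota y} moves strictly fewer points. *)
move=> Giota s; have [n] := ubnP #|[set y | s y != y]|.
elim: n s => // n IH s moved_lt Hs.
have [->|/eqP s_neq1] := eqVneq s 1%g; first exact: group1.
have [y sy] : exists y, s y != y.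
  apply/existsP; apply: contra_notT s_neq1 => /existsPn s_fix.
  by apply/permP=> z; rewrite perm1; apply/eqP/negPn/s_fix.
have s_pair z : s z = z \/ s z = iota z by apply: pi_fiber; rewrite Hs.
have sy_iota : s y = iota y by case: (s_pair y) => // e; rewrite e eqxx in sy.
have siy : s (iota y) = y.
  case: (s_pair (iota y)) => [e|]; last by rewrite iotaK.
  have /perm_inj iy : s (iota y) = s y by rewrite e sy_iota.
  by have := iota_neq y; rewrite iy eqxx.
set s' := (s * tperm y (iota y))%g.
suff Gs' : s' \in G by rewrite -(mulgK (tperm y (iota y)) s) groupM ?groupV.
apply: IH => [|i]; last first.
  by rewrite /s' permM -[RHS]Hs; case: tpermP => [->|->|//]; rewrite pi_iota.
suff /proper_card : [set z | s' z != z] \proper [set z | s z != z].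
  by rewrite ltnS in moved_lt => /leq_trans; apply.
apply/properP; split.
  apply/subsetP=> z; rewrite !inE /s' permM; apply: contraNN => /eqP sz.
  rewrite sz; case: tpermP => [zy|ziy|//].
    by move: sy; rewrite -zy sz eqxx.
  by move: sz; rewrite ziy siy => yiy; have := iota_neq y; rewrite -yiy eqxx.
by exists y; rewrite !inE ?sy // /s' permM sy_iota tpermR eqxx.
Qed.

Lemma fiber_stab_of_tperm x y : x != y -> tperm x y \in G -> G :=: fiber_stab pi.
Proof.
move=> xy Gxy; apply/eqP; rewrite eqEsubset G_sub; apply/subsetP=> s Hs.
have [w Hw] := fiber_stab_induced Hs; have [s2 Gs2 Hs2] := G_lift w.
have Gk : (s * s2^-1)%g \in G.
  apply: (fiber_kernel_sub (tperm_iota_mem xy Gxy)) => i; rewrite permM.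
  by apply: (@perm_inj _ w); rewrite -Hs2 permKV Hw.
by rewrite -(mulgKV s2 s) groupM.
Qed.

End PairedFibers.

Lemma fiber_stab_isog_W g (pi : 'I_(g.*2) -> 'I_g) (iota : 'I_(g.*2) -> 'I_(g.*2)) :
  involutive iota -> (forall i, pi (iota i) = pi i) ->
  (forall i j, pi j = pi i -> j = i \/ j = iota i) ->
  (fiber_stab pi \isog W g)%g.
Proof.
move=> iotaK pi_iota pi_fiber.
have card_T : #|'I_(g.*2)| = (#|'I_g|).*2 by rewrite !card_ord.
have [a aK] := fin_all_exists (pi_surj pi_fiber card_T).
pose h (k : 'I_(g.*2)) : 'I_g := Ordinal (etrans (ltn_half_double k g) (ltn_ord k)).
(* tau0 sends 2u and 2u+1 to the two points of the fiber over u. *)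
pose tau0 (k : 'I_(g.*2)) := if odd k then iota (a (h k)) else a (h k).
have pi_tau0 k : pi (tau0 k) = h k by rewrite /tau0; case: ifP; rewrite ?pi_iota aK.
have tau_inj : injective tau0.
  move=> k l tau_kl; have hkl : h k = h l by rewrite -!pi_tau0 tau_kl.
  suff odd_kl : odd k = odd l.
    apply/val_inj; rewrite -[val k]odd_double_half -[val l]odd_double_half odd_kl.
    by have /= -> := congr1 val hkl.
  have iota_neq := iota_neq pi_fiber card_T (a (h l)).
  move: tau_kl; rewrite /tau0 hkl.
  case: (odd k); case: (odd l) => // e; move: iota_neq.
    by rewrite e eqxx.
  by rewrite -e eqxx.
have -> : W g = fiber_stab h by rewrite W_fiber_stab -(fiber_stab_comp h val_inj).
have -> : fiber_stab h = (fiber_stab pi :^ (perm tau_inj)^-1)%g.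
  by rewrite fiber_stabJ invgK; apply: eq_fiber_stab => k; rewrite permE pi_tau0.
exact: conj_isog.
Qed.

Lemma galpermP n (rs : n.-tuple algC) (s : 'S_n) :
  reflect (exists u : {rmorphism algC -> algC}, forall i, u (tnth rs i) = tnth rs (s i))
          (s \in galperm rs).
Proof. by rewrite inE; apply: (iffP (asboolP _)). Qed.

Lemma galperm_group_set n (rs : n.-tuple algC) : group_set (galperm rs).
Proof.
apply/group_setP; split; first by apply/galpermP; exists idfun => i; rewrite perm1.
move=> s t /galpermP[u Hu] /galpermP[v Hv]; apply/galpermP.
by exists (v \o u) => i; rewrite permM /= Hu Hv.
Qed.

Canonical galperm_group n rs := Group (@galperm_group_set n rs).

Lemma tuple_perm (T : eqType) n (t t' : n.-tuple T) :
  uniq t' -> {subset t' <= t} -> exists sg : 'S_n, forall i, tnth t (sg i) = tnth t' i.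
Proof.
move=> /tuple_uniqP t'_inj t't.
have /fin_all_exists[h hE] : forall i, exists j, tnth t' i = tnth t j.
  by move=> i; apply/tnthP/t't/mem_tnth.
have h_inj : injective h by move=> i j hij; apply: t'_inj; rewrite !hE hij.
by exists (perm h_inj) => i; rewrite permE hE.
Qed.

Lemma root_numbering_root (f : {poly int}) n (rs : n.-tuple algC) z :
  f != 0 -> root_numbering f rs -> root (polyC_of f) z = (z \in rs).
Proof.
move=> f0 [_ ->]; rewrite rootE hornerZ mulf_eq0 intr_eq0 lead_coef_eq0 (negbTE f0).
by rewrite -rootE root_prod_XsubC.
Qed.

Lemma size_root_numbering (f : {poly int}) n (rs : n.-tuple algC) :
  f != 0 -> root_numbering f rs -> n = (size f).-1.
Proof.
move=> f0 [_ fE]; have := congr1 (fun p : {poly algC} => size p) fE; rewrite /=.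
rewrite size_map_inj_poly ?intr_eq0 ?lead_coef_eq0 //; last exact: intr_inj.
by rewrite size_scale ?intr_eq0 ?lead_coef_eq0 // size_prod_XsubC size_tuple => ->.
Qed.

Lemma root_polyC_of_rmorph (u : {rmorphism algC -> algC}) f z :
  root (polyC_of f) z -> root (polyC_of f) (u z).
Proof.
have uf : map_poly u (polyC_of f) = polyC_of f.
  by rewrite /polyC_of -map_poly_comp; apply: eq_map_poly => c /=; apply: rmorph_int.
by move=> /rootP fz; apply/rootP; rewrite -uf horner_map fz rmorph0.
Qed.

Section GaloisPermutations.

Variables (f : {poly int}) (n : nat) (rs : n.-tuple algC).
Hypotheses (f_neq0 : f != 0) (rs_roots : root_numbering f rs).

Lemma galperm_lift (u : {rmorphism algC -> algC}) :
  exists2 s, s \in galperm rs & forall i, u (tnth rs i) = tnth rs (s i).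
Proof.
have [||s sE] := @tuple_perm _ _ rs (map_tuple u rs).
- by rewrite map_inj_uniq ?rs_roots.1 //; apply: fmorph_inj.
- move=> _ /mapP[z zrs ->]; rewrite -(root_numbering_root _ f_neq0 rs_roots).
  by apply: root_polyC_of_rmorph; rewrite (root_numbering_root _ f_neq0 rs_roots).
have us i : u (tnth rs i) = tnth rs (s i) by rewrite sE tnth_map.
by exists s => //; apply/galpermP; exists u.
Qed.

Lemma galperm_cycle_type sigma :
  has_cycle_type f sigma -> exists2 s, s \in galperm rs & cycle_type s = sigma.
Proof.
have n_eq := size_root_numbering f_neq0 rs_roots; subst n.
move=> [rs' [rs'_roots [s' /galpermP[u us'] <-]]].
have [|sg sgE] := @tuple_perm _ _ rs rs' rs'_roots.1.
  by move=> z; rewrite -!(root_numbering_root _ f_neq0).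
exists (s' ^ sg)%g; last exact: cycle_typeJ.
by apply/galpermP; exists u => j; rewrite -(permKV sg j) permJ !sgE us'.
Qed.

End GaloisPermutations.

Lemma root_functional_eq (f : {poly algC}) (c x y : algC) (d : nat) :
  f.[x] * y ^+ d = c * f.[y] -> y != 0 -> root f y -> root f x.
Proof.
move=> fxy y0 /rootP fy; apply/rootP/eqP.
by move: fxy; rewrite fy mulr0 => /eqP; rewrite mulf_eq0 expf_eq0 (negbTE y0) andbF orbF.
Qed.

Lemma root_substitution (f h : {poly algC}) (x y : algC) (d : nat) :
  f.[y] = y ^+ d * h.[x] -> y != 0 -> root f y -> root h x.
Proof.
move=> fyx y0 /rootP fy; apply/rootP/eqP.
by move: fyx; rewrite fy => /esym/eqP; rewrite mulf_eq0 expf_eq0 (negbTE y0) andbF.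
Qed.

Section WeilPairing.

Variables (q : nat) (P Q : {poly int}) (g : nat).
Variables (rs : (g.*2).-tuple algC) (rsQ : g.-tuple algC).
Hypotheses (q_gt0 : (0 < q)%N) (P_neq0 : P != 0) (Q_neq0 : Q != 0).
Hypotheses (rs_roots : root_numbering P rs) (rsQ_roots : root_numbering Q rsQ).
Hypothesis root_neq0 : forall z, root (polyC_of P) z -> z != 0.
Hypothesis root_dual : forall z, root (polyC_of P) z -> root (polyC_of P) (q%:R / z).
Hypothesis root_trace : forall z, root (polyC_of P) z -> root (polyC_of Q) (z + q%:R / z).

Let rs_rootE z : root (polyC_of P) z = (z \in rs) := root_numbering_root z P_neq0 rs_roots.
Let rsQ_rootE z : root (polyC_of Q) z = (z \in rsQ) := root_numbering_root z Q_neq0 rsQ_roots.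
Let rs_inj : injective (tnth rs) := elimT (tuple_uniqP rs) rs_roots.1.
Let rsQ_inj : injective (tnth rsQ) := elimT (tuple_uniqP rsQ) rsQ_roots.1.
Let q_neq0 : q%:R != 0 :> algC.
Proof. by rewrite pnatr_eq0 -lt0n. Qed.
Let rs_neq0 i : tnth rs i != 0.
Proof. by apply: root_neq0; rewrite rs_rootE mem_tnth. Qed.

Lemma dual_ex i : exists j, tnth rs j == q%:R / tnth rs i.
Proof.
have /tnthP[j ->] : q%:R / tnth rs i \in rs by rewrite -rs_rootE root_dual ?rs_rootE ?mem_tnth.
by exists j.
Qed.

Lemma trace_ex i : exists j, tnth rsQ j == tnth rs i + q%:R / tnth rs i.
Proof.
have /tnthP[j ->] : tnth rs i + q%:R / tnth rs i \in rsQ.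
  by rewrite -rsQ_rootE root_trace ?rs_rootE ?mem_tnth.
by exists j.
Qed.

Definition dual i := xchoose (dual_ex i).
Definition trace i := xchoose (trace_ex i).

Lemma dualE i : tnth rs (dual i) = q%:R / tnth rs i.
Proof. exact/eqP/(xchooseP (dual_ex i)). Qed.

Lemma traceE i : tnth rsQ (trace i) = tnth rs i + q%:R / tnth rs i.
Proof. exact/eqP/(xchooseP (trace_ex i)). Qed.

Lemma dualK : involutive dual.
Proof. by move=> i; apply: rs_inj; rewrite !dualE invfM invrK mulrA divff ?mul1r. Qed.

Lemma trace_dual i : trace (dual i) = trace i.
Proof.
apply: rsQ_inj; rewrite !traceE dualE invfM invrK mulrA divff ?mul1r //.
by rewrite addrC.
Qed.

(* a + q/a = b + q/b forces (a - b) (a b - q) = 0. *)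
Lemma trace_fiber i j : trace j = trace i -> j = i \/ j = dual i.
Proof.
move=> /(congr1 (tnth rsQ)); rewrite !traceE => /eqP; rewrite -subr_eq0.
set a := tnth rs j; set b := tnth rs i => ab.
have : (a - b) * (a * b - q%:R) == 0.
  have -> : (a - b) * (a * b - q%:R) = (a + q%:R / a - (b + q%:R / b)) * (a * b).
    by field; rewrite !rs_neq0.
  by rewrite (eqP ab) mul0r.
rewrite mulf_eq0 !subr_eq0 => /orP[/eqP/rs_inj -> | /eqP abq]; first by left.
by right; apply: rs_inj; rewrite dualE -/a -abq mulfK ?rs_neq0.
Qed.

Lemma trace_galperm (u : {rmorphism algC -> algC}) (s : 'S_(g.*2)) :
  (forall i, u (tnth rs i) = tnth rs (s i)) ->
  forall i, tnth rsQ (trace (s i)) = u (tnth rsQ (trace i)).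
Proof. by move=> us i; rewrite !traceE rmorphD fmorph_div rmorph_nat us. Qed.

Lemma galperm_sub_fiber_stab : galperm rs \subset fiber_stab trace.
Proof.
apply/subsetP=> s /galpermP[u us]; apply/fiber_stabP=> i j.
by rewrite -(inj_eq rsQ_inj) !(trace_galperm us) (inj_eq (fmorph_inj u)) (inj_eq rsQ_inj).
Qed.

Lemma galperm_lift_trace w : w \in galperm rsQ ->
  exists2 s, s \in galperm rs & forall i, trace (s i) = w (trace i).
Proof.
move=> /galpermP[u uw]; have [s Gs us] := galperm_lift P_neq0 rs_roots u.
by exists s => // i; apply: rsQ_inj; rewrite (trace_galperm us) uw.
Qed.

Lemma galperm_isog_W :
  galperm rsQ = [set: 'S_g] -> (exists x y, x != y /\ tperm x y \in galperm rs) ->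
  (galperm rs \isog W g)%g.
Proof.
move=> GQ [x [y [xy Gxy]]].
have card_T : #|'I_(g.*2)| = (#|'I_g|).*2 by rewrite !card_ord.
have lift (w : 'S_g) : exists2 s, s \in galperm rs & forall i, trace (s i) = w (trace i).
  by apply: galperm_lift_trace; rewrite GQ inE.
rewrite (fiber_stab_of_tperm dualK trace_dual trace_fiber card_T
           galperm_sub_fiber_stab lift xy Gxy).
exact: fiber_stab_isog_W dualK trace_dual trace_fiber.
Qed.

End WeilPairing.

Theorem lemma6p5 (p k g : nat) (P Q : {poly int}) :
  prime p -> (0 < k)%N -> (1 <= g)%N ->
  P \is monic -> size P = (g.*2).+1 ->
  (forall z : algC, z != 0 ->
     (polyC_of P).[(p ^ k)%:R / z] * z ^+ g.*2 = ((p ^ k)%:R) ^+ g * (polyC_of P).[z]) ->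
  (forall z : algC, root (polyC_of P) z -> `|z| ^+ 2 = (p ^ k)%:R) ->
  (forall z : algC, z != 0 ->
     (polyC_of P).[z] = z ^+ g * (polyC_of Q).[z + (p ^ k)%:R / z]) ->
  has_cycle_type P [:: g.*2] ->
  has_cycle_type P (2%N :: nseq (g.*2 - 2) 1%N) ->
  (forall sigma, is_partition g sigma -> has_cycle_type Q sigma) ->
  forall rs : ((size P).-1).-tuple algC, root_numbering P rs ->
    (galperm rs \isog W g)%g.
Proof.
move=> p_prime _ g_gt0 P_monic sizeP P_weil P_abs P_Q _ P_tperm Q_all.
rewrite sizeP /= => rs rs_roots.
have q_gt0 : (0 < p ^ k)%N by rewrite expn_gt0 prime_gt0.
have P_neq0 : P != 0 := monic_neq0 P_monic.
have [rsQ0 [rsQ0_roots [s0 _ s0_cycle]]] := Q_all _ (is_partition_full g_gt0).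
have sizeQ : (size Q).-1 = g by rewrite -(sumn_cycle_type s0) s0_cycle /= addn0.
have Q_neq0 : Q != 0 by apply/eqP=> Q0; move: g_gt0; rewrite -sizeQ Q0 size_poly0.
have rsQ_roots : root_numbering Q (tcast sizeQ rsQ0) by rewrite /root_numbering val_tcast.
have root_neq0 z : root (polyC_of P) z -> z != 0.
  move=> /P_abs zq; apply: contra_eqN zq => /eqP ->.
  by rewrite normr0 expr0n /= eq_sym pnatr_eq0 -lt0n.
have root_dual z (Pz : root (polyC_of P) z) :=
  root_functional_eq (P_weil _ (root_neq0 _ Pz)) (root_neq0 _ Pz) Pz.
have root_trace z (Pz : root (polyC_of P) z) :=
  root_substitution (P_Q _ (root_neq0 _ Pz)) (root_neq0 _ Pz) Pz.
apply: (galperm_isog_W q_gt0 P_neq0 Q_neq0 rs_roots rsQ_roots root_neq0 root_dual root_trace).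
  apply: perm_group_all_cycle_types (galperm_group _) _ => sigma /Q_all.
  exact: galperm_cycle_type Q_neq0 rsQ_roots sigma.
have [t Gt /cycle_type_tperm[x [y [xy tE]]]] := galperm_cycle_type P_neq0 rs_roots P_tperm.
by exists x, y; rewrite -tE.
Qed.
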